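(* Let $\Theta_{\mathrm{Sym}(V)}:\mathrm{Sym}(V)\to\mathrm{Sym}(V)$ be the linear map with $\Theta_{\mathrm{Sym}(V)}(\overline{v_\alpha})=2^{\ell(\alpha)}\overline{v_\alpha}$ if $v_\alpha$ is odd and $0$ otherwise. Then $\Theta_{\mathrm{Sym}(V)}$ is a graded Hopf algebra morphism with image in $\mathrm{Sym}(\mathrm{O}(V))$, and $\Phi_{\mathrm{Sym}(V)}\circ\Theta_{\mathrm{Sym}(V)}=\Theta_{\mathrm{Sym}}\circ\Phi_{\mathrm{Sym}(V)}$. Thus $\Theta_{\mathrm{Sym}(V)}$ is a theta map for $(\mathrm{Sym}(V),\zeta_{\mathrm{Sym}(V)})$.
   Context: $V$ is a graded vector space with fixed homogeneous basis $\{v_1,v_2,\dots\}$, positive degrees, finitely many of each degree. For a composition $\alpha=(\alpha_1,\dots,\alpha_\ell)$ ($\ell(\alpha)=\ell$), $v_\alpha=v_{\alpha_1}\cdots v_{\alpha_\ell}$ in the tensor algebra $\mathrm{T}(V)$ (concatenation product, $v_i$ primitive). $\mathrm{Sym}(V)=\mathrm{T}(V)/I(V)$ where $I(V)$ is the ideal generated by all $v_iv_j-v_jv_i$; $\overline{v_\alpha}$ is the class of $v_\alpha$, $\deg(\overline{v_\alpha})=\sum\deg(v_{\alpha_i})$. $v_\alpha$ is odd if every $\deg(v_{\alpha_i})$ is odd; $\mathrm{Sym}(\mathrm{O}(V))$ is the span of $\overline{v_\alpha}$ with $v_\alpha$ odd. $\mathrm{Sym}$ is the Hopf algebra of symmetric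 functions with scaled power sums $p_n=\frac1n\sum_i x_i^n$ (primitive, freely generating). $\Phi_{\mathrm{Sym}(V)}:\mathrm{Sym}(V)\to\mathrm{Sym}$ is the algebra morphism $\overline{v_i}\mapsto p_{\deg(v_i)}$; $\zeta_{\mathrm{Sym}(V)}$ is the character $\overline{v_i}\mapsto 1/\deg(v_i)$. $\zeta_{\mathrm{Sym}}(f)=f(1,0,0,\dots)$. $\Theta_{\mathrm{Sym}}$ is the unique graded Hopf morphism $\mathrm{Sym}\to\mathrm{Sym}$ with $\zeta_{\mathrm{Sym}}\circ\Theta_{\mathrm{Sym}}=\overline{\zeta_{\mathrm{Sym}}^{-1}}\zeta_{\mathrm{Sym}}$ (convolution $\zeta\zeta'=m\circ(\zeta\otimes\zeta')\circ\Delta$, $\zeta^{-1}=\zeta\circ\mathcal{S}$, $\bar\zeta=(-1)^n\zeta$ in degree $n$); equivalently the algebra morphism with $\Theta_{\mathrm{Sym}}(p_n)=2p_n$ for $n$ odd and $0$ for $n$ even. A theta map here means a graded Hopf morphism $\Theta$ of $\mathrm{Sym}(V)$ with $\Phi_{\mathrm{Sym}(V)}\circ\Theta=\Theta_{\mathrm{Sym}}\circ\Phi_{\mathrm{Sym}(V)}$. *)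

From HB Require Import structures.
From mathcomp Require Import all_boot all_order all_algebra.
From mathcomp Require Import finmap.
From mathcomp.multinomials Require Import monalg.

Set Implicit Arguments.
Unset Strict Implicit.
Unset Printing Implicit Defensive.

Import GRing.Theory.
Local Open Scope fset_scope.
Local Open Scope ring_scope.

(* Product of two monomial monoids (basis of a tensor product of two   *)
(* monoid algebras: F[M1] (x) F[M2] = F[M1 x M2]).                      *)
Section MPair.
Variables (M1 M2 : conomType).
Definition mpair := (M1 * M2)%type.
HB.instance Definition _ := Choice.on mpair.

Definition mpair_one : mpair := (mone, mone).
Definition mpair_mul (x y : mpair) : mpair := (mmul x.1 y.1, mmul x.2 y.2).

Lemma mpair_mulA : associative mpair_mul.
Proof. by move=> [a b] [c d] [e f]; rewrite /mpair_mul /= !mulmA. Qed.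
Lemma mpair_mul1m : left_id mpair_one mpair_mul.
Proof. by move=> [a b]; rewrite /mpair_mul /= !mul1m. Qed.
Lemma mpair_mulm1 : right_id mpair_one mpair_mul.
Proof. by move=> [a b]; rewrite /mpair_mul /= !mulm1. Qed.
Lemma mpair_unitm x y : mpair_mul x y = mpair_one -> x = mpair_one /\ y = mpair_one.
Proof.
case: x y => [a b] [c d] [] /unitm [-> ->] /unitm [-> ->]; by [].
Qed.
Lemma mpair_mulC : commutative mpair_mul.
Proof. by move=> [a b] [c d]; rewrite /mpair_mul /= (mulmC a) (mulmC b). Qed.

HB.instance Definition _ := Choice_isMonomialDef.Build mpair
  mpair_mulA mpair_mul1m mpair_mulm1 mpair_unitm.
HB.instance Definition _ := MonomialDef_isConomialDef.Build mpair mpair_mulC.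
End MPair.

Section SymV.
Variable F : fieldType.

Definition polyalg (J : choiceType) := {malg F[{cmonom J}]}.

Definition gen (J : choiceType) (j : J) : polyalg J := << ucm j >>.

Definition extm (J : choiceType) (A : lalgType F) (x : J -> A)
    (g : polyalg J) : A :=
  \sum_(m <- msupp g) g@_m *: \prod_(j <- finsupp m) x j ^+ m j.

Variables (I : choiceType) (deg : I -> nat).

(* Sym(V): polynomial algebra on the basis v_i of V, v_i = gen i. *)
Definition SymV := polyalg I.

Definition SymV2 := {malg F[mpair {cmonom I} {cmonom I}]}.

Definition tens_l (a : SymV) : SymV2 :=
  \sum_(m <- msupp a) a@_m *: << (m, @onecm I) : mpair _ _ >>.
Definition tens_r (a : SymV) : SymV2 :=
  \sum_(m <- msupp a) a@_m *: << (@onecm I, m) : mpair _ _ >>.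
Definition tens (a b : SymV) : SymV2 := tens_l a * tens_r b.

Definition tmap (f g : SymV -> SymV) (t : SymV2) : SymV2 :=
  \sum_(k <- msupp t) t@_k *: tens (f << k.1 >>) (g << k.2 >>).

Definition coprod : SymV -> SymV2 :=
  extm (fun i => tens (gen i) 1 + tens 1 (gen i)).
Definition counit (a : SymV) : F := a@_(@onecm I).
Definition antipode : SymV -> SymV := extm (fun i => - gen i).

Definition hopf_morph (T : SymV -> SymV) : Prop :=
  [/\ (forall (c : F) (a b : SymV), T (c *: a + b) = c *: T a + T b),
      T 1 = 1 &
      (forall a b : SymV, T (a * b) = T a * T b)] /\
  [/\ (forall a : SymV, coprod (T a) = tmap T T (coprod a)),
      (forall a : SymV, counit (T a) = counit a) &
      (forall a : SymV, antipode (T a) = T (antipode a))].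

Definition wdeg (m : {cmonom I}) : nat :=
  (\sum_(i <- finsupp m) m i * deg i)%N.
Definition homog (n : nat) (a : SymV) : Prop :=
  forall m, m \in msupp a -> wdeg m = n.
Definition graded (T : SymV -> SymV) : Prop :=
  forall n a, homog n a -> homog n (T a).

(* v_alpha odd: every letter has odd degree; l(alpha) = mdeg m *)
Definition odd_monom (m : {cmonom I}) : bool :=
  all (fun i => odd (deg i)) (finsupp m).
Definition in_SymO (a : SymV) : Prop :=
  forall m, m \in msupp a -> odd_monom m.

Definition ThetaSymV (a : SymV) : SymV :=
  \sum_(m <- msupp a)
    a@_m *: (if odd_monom m then (2%:R ^+ mdeg m) *: << m >> else 0).

(* Sym = F[p_1, p_2, ...]; the variable k : nat stands for p_(k+1). *)
Definition Sym := polyalg nat.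
Definition pn (n : nat) : Sym := gen n.-1.

Definition PhiSymV : SymV -> Sym := extm (fun i => pn (deg i)).

Definition ThetaSym : Sym -> Sym :=
  extm (fun k : nat => if odd k.+1 then 2%:R *: pn k.+1 else 0).

Definition is_theta_map (T : SymV -> SymV) : Prop :=
  [/\ hopf_morph T, graded T &
      forall a, PhiSymV (T a) = ThetaSym (PhiSymV a)].
End SymV.

From HB Require Import structures.
From mathcomp Require Import all_boot all_order all_algebra.
From mathcomp Require Import finmap.
From mathcomp.multinomials Require Import monalg.

(* All maps in sight are algebra morphisms out of polynomial algebras F[x_j],
   obtained by extending linearly a multiplicative function on monomials, and
   such morphisms agree as soon as they agree on the generators.  Theta is of
   this form, since the weight of v_alpha (2^l(alpha) if v_alpha is odd, 0
   otherwise) is multiplicative, and Theta(v_i) is a multiple of v_i.  As the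
   v_i are primitive, an algebra endomorphism rescaling every generator
   commutes with the coproduct and the antipode.  The coefficient of v_alpha
   in Theta(a) is that of a times the weight of v_alpha, which gives the
   counit, the grading and the image in Sym(O(V)).  Finally Phi o Theta and
   Theta_Sym o Phi agree on v_i because Theta_Sym(p_n) is 2 p_n or 0
   according to the parity of n = deg v_i > 0. *)

Set Implicit Arguments.
Unset Strict Implicit.
Unset Printing Implicit Defensive.

Import GRing.Theory.
Local Open Scope ring_scope.

Section MonoidAlgebra.
Variable F : fieldType.

Lemma monalgUZ (K : choiceType) (c : F) (k : K) :
  << c *g k >> = c *: << k >> :> {malg F[K]}.
Proof. by apply/malgP => k'; rewrite mcoeffZ !mcoeffU mulr_natr. Qed.

Lemma monalgU1 (K : monomType) : << mone >> = 1 :> {malg F[K]}.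
Proof. by []. Qed.

Lemma monalgUM (K : monomType) (k1 k2 : K) :
  << k1 >> * << k2 >> = << mmul k1 k2 >> :> {malg F[K]}.
Proof. by rewrite malgM_def fgmulUU mulr1. Qed.

Lemma monalgUX (K : monomType) (k : K) n :
  << k >> ^+ n = << \big[mmul/mone]_(i < n) k >> :> {malg F[K]}.
Proof.
elim: n => [|n IHn]; first by rewrite expr0 big_ord0.
by rewrite exprS IHn big_ord_recl monalgUM.
Qed.

Lemma cmonom_prodE (J : choiceType) (m : {cmonom J}) :
  m = \big[mmul/mone]_(j <- finsupp m) \big[mmul/mone]_(i < m j) ucm j.
Proof.
have evalE i (T : Type) (r : seq T) (f : T -> {cmonom J}) :
    (\big[mmul/mone]_(t <- r) f t) i = (\sum_(t <- r) f t i)%N.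
  exact: (big_morph (fun m : {cmonom J} => m i) (fun a b => cmM i a b) (cm1 i)).
apply/eqP/cmP => i; rewrite evalE.
under eq_bigr do rewrite evalE big_const_ord iter_addn_0 cmU.
case: mdomP => [iin|iout].
  rewrite (big_fsetD1 i iin) /= eqxx mul1n big1_seq ?addn0 // => j.
  by rewrite in_fsetD1 => /andP[_ /andP[/negPf-> _]]; rewrite mul0n.
rewrite big1_seq // => j /andP[_ jin].
by case: eqP => [ji|_]; [rewrite -ji jin in iout | rewrite mul0n].
Qed.

Lemma monE (J : choiceType) (m : {cmonom J}) :
  << m >> = \prod_(j <- finsupp m) gen F j ^+ m j :> polyalg F J.
Proof.
rewrite {1}[m]cmonom_prodE (big_morph (fun k => << k >> : polyalg F J)
  (fun a b => esym (monalgUM a b)) (erefl _)).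
by apply: eq_bigr => j _; rewrite monalgUX.
Qed.

Section LinearExtension.
Variables (K : choiceType) (V : lmodType F) (phi : K -> V).

Definition linext (g : {malg F[K]}) : V := \sum_(k <- msupp g) g@_k *: phi k.

Lemma linextEw {d : {fset K}} {g} : (msupp g `<=` d)%fset ->
  linext g = \sum_(k <- d) g@_k *: phi k.
Proof.
move=> le; rewrite /linext (big_fset_incl _ le) //= => k _ /mcoeff_outdom ->.
by rewrite scale0r.
Qed.

Lemma linext_is_linear : linear linext.
Proof.
move=> c a b; set s := c *: a + b.
pose d := (msupp a `|` msupp b `|` msupp s)%fset.
have sub g : g \in [:: a; b; s] -> (msupp g `<=` d)%fset.
  by rewrite !inE => /or3P[] /eqP->; apply/fsubsetP => k kin;
    rewrite !in_fsetU kin ?orbT.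
rewrite (linextEw (sub s _)) ?(linextEw (sub a _)) ?(linextEw (sub b _))
  ?inE ?eqxx ?orbT // scaler_sumr -big_split /=.
by apply: eq_bigr => k _; rewrite mcoeffD mcoeffZ scalerDl scalerA.
Qed.

HB.instance Definition _ :=
  GRing.isLinear.Build F {malg F[K]} V *:%R linext linext_is_linear.

Lemma linextU k : linext << k >> = phi k.
Proof. by rewrite (linextEw msuppU_le) big_seq_fset1 mcoeffUU scale1r. Qed.
End LinearExtension.

Lemma malg_linear_eq (K : choiceType) (V : lmodType F)
    (f g : {linear {malg F[K]} -> V}) :
  (forall k, f << k >> = g << k >>) -> f =1 g.
Proof.
move=> fg a; rewrite (monalgE a) !linear_sum; apply: eq_bigr => k _.
by rewrite monalgUZ !linearZ fg.
Qed.

Section MultiplicativeExtension.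
Variables (K : monomType) (A : algType F) (phi : {mmorphism K -> A}).

Lemma linext_is_monoid_morphism : monoid_morphism (linext phi).
Proof.
split=> [|a b]; first by rewrite linextU mmorph1.
rewrite /= [linext phi a]/linext [linext phi b]/linext malgME.
rewrite linear_sum mulr_suml; apply: eq_bigr => k1 _.
rewrite linear_sum mulr_sumr; apply: eq_bigr => k2 _.
rewrite monalgUZ linearZ /= (linextU phi (mmul k1 k2)) mmorphM.
by rewrite -scalerAl -scalerAr scalerA.
Qed.

HB.instance Definition _ := GRing.isMonoidMorphism.Build {malg F[K]} A
  (linext phi) linext_is_monoid_morphism.
End MultiplicativeExtension.

Section Evaluation.
Variables (J : choiceType) (A : comAlgType F) (x : J -> A).

Definition monom_eval (m : {cmonom J}) : A := \prod_(j <- finsupp m) x j ^+ m j.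

Lemma monom_evalEw (m : {cmonom J}) (d : {fset J}) : (finsupp m `<=` d)%fset ->
  monom_eval m = \prod_(j <- d) x j ^+ m j.
Proof.
move=> le; rewrite /monom_eval (big_fset_incl _ le) //= => j _.
by rewrite -cmE_eq0 => /eqP ->; rewrite expr0.
Qed.

Lemma monom_eval_is_mmorphism : mmorphism monom_eval.
Proof.
split=> [m1 m2|]; last by rewrite /monom_eval mdom1 big_seq_fset0.
rewrite (monom_evalEw (fsubset_refl _)) mdomD.
rewrite (monom_evalEw (fsubsetUl _ (finsupp m2))).
rewrite (monom_evalEw (fsubsetUr (finsupp m1) _)) -big_split /=.
by apply: eq_bigr => j _; rewrite cmM exprD.
Qed.

HB.instance Definition _ := isMultiplicative.Build {cmonom J} A monom_eval
  monom_eval_is_mmorphism.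
HB.instance Definition _ := GRing.LRMorphism.copy (extm x) (linext monom_eval).

Lemma extm_gen j : extm x (gen F j) = x j.
Proof.
by rewrite /extm -/(linext _ _) linextU /monom_eval mdomU big_seq_fset1 cmUU.
Qed.
End Evaluation.

Lemma polyalg_lrmorph_eq (J : choiceType) (B : algType F)
    (f g : {lrmorphism polyalg F J -> B}) :
  (forall j, f (gen F j) = g (gen F j)) -> f =1 g.
Proof.
move=> fg; apply: malg_linear_eq => m; rewrite monE !rmorph_prod.
by apply: eq_bigr => j _; rewrite !rmorphXn; congr (_ ^+ _); apply: fg.
Qed.
End MonoidAlgebra.

Section Tensor.
Variables (F : fieldType) (I : choiceType).
Local Notation SV := (SymV F I).
Local Notation SV2 := (SymV2 F I).
Local Notation tens_l := (@tens_l F I).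
Local Notation tens_r := (@tens_r F I).
Local Notation tens := (@tens F I).
Local Notation tmap := (@tmap F I).

Definition inl_monom (m : {cmonom I}) : SV2 := << (m, mone) : mpair _ _ >>.
Definition inr_monom (m : {cmonom I}) : SV2 := << (mone, m) : mpair _ _ >>.

Lemma inl_monom_is_mmorphism : mmorphism inl_monom.
Proof.
split=> // m1 m2; rewrite /inl_monom monalgUM.
by congr << _ >>; rewrite /mmul /= /mpair_mul /= mulm1.
Qed.

Lemma inr_monom_is_mmorphism : mmorphism inr_monom.
Proof.
split=> // m1 m2; rewrite /inr_monom monalgUM.
by congr << _ >>; rewrite /mmul /= /mpair_mul /= mulm1.
Qed.

HB.instance Definition _ :=
  isMultiplicative.Build _ _ inl_monom inl_monom_is_mmorphism.
HB.instance Definition _ :=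
  isMultiplicative.Build _ _ inr_monom inr_monom_is_mmorphism.
HB.instance Definition _ := GRing.LRMorphism.copy tens_l (linext inl_monom).
HB.instance Definition _ := GRing.LRMorphism.copy tens_r (linext inr_monom).

Lemma tens_lU m : tens_l << m >> = inl_monom m. Proof. exact: linextU. Qed.
Lemma tens_rU m : tens_r << m >> = inr_monom m. Proof. exact: linextU. Qed.

Lemma tensZl c (a b : SV) : tens (c *: a) b = c *: tens a b.
Proof. by rewrite /tens linearZ -scalerAl. Qed.

Lemma tensZr c (a b : SV) : tens a (c *: b) = c *: tens a b.
Proof. by rewrite /tens [tens_r _]linearZ -scalerAr. Qed.

Lemma tens_primitiveZ c v :
  tens (c *: v) 1 + tens 1 (c *: v) = c *: (tens v 1 + tens 1 v).
Proof. by rewrite tensZl tensZr scalerDr. Qed.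

Lemma tens_mul (a b a' b' : SV) :
  tens a b * tens a' b' = tens (a * a') (b * b').
Proof. by rewrite /tens mulrACA !rmorphM. Qed.

Lemma tens_a1 a : tens a 1 = tens_l a.
Proof. by rewrite /tens rmorph1 mulr1. Qed.

Lemma tens_1b b : tens 1 b = tens_r b.
Proof. by rewrite /tens rmorph1 mul1r. Qed.

Lemma tens11 : tens 1 1 = 1.
Proof. by rewrite tens_a1 rmorph1. Qed.

Section TensorMap.
Variables (f g : {lrmorphism SV -> SV}).

Definition tmap_monom (k : mpair {cmonom I} {cmonom I}) : SV2 :=
  tens (f << k.1 >>) (g << k.2 >>).

Lemma tmap_monom_is_mmorphism : mmorphism tmap_monom.
Proof.
split=> [[m1 m2] [n1 n2]|].
  by rewrite /tmap_monom tens_mul /= -!monalgUM !rmorphM.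
by rewrite /tmap_monom /= !rmorph1 tens11.
Qed.

HB.instance Definition _ :=
  isMultiplicative.Build _ _ tmap_monom tmap_monom_is_mmorphism.
HB.instance Definition _ :=
  GRing.LRMorphism.copy (tmap f g) (linext tmap_monom).

Lemma tmapU m1 m2 :
  tmap f g << (m1, m2) : mpair _ _ >> = tens (f << m1 >>) (g << m2 >>).
Proof. exact: linextU. Qed.

Lemma tmap_tens_l a : tmap f g (tens_l a) = tens_l (f a).
Proof.
apply: (malg_linear_eq (f := tmap f g \o tens_l) (g := tens_l \o f)) => m /=.
by rewrite tens_lU tmapU monalgU1 [g 1]rmorph1 tens_a1.
Qed.

Lemma tmap_tens_r b : tmap f g (tens_r b) = tens_r (g b).
Proof.
apply: (malg_linear_eq (f := tmap f g \o tens_r) (g := tens_r \o g)) => m /=.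
by rewrite tens_rU tmapU monalgU1 [f 1]rmorph1 tens_1b.
Qed.

Lemma tmap_tens a b : tmap f g (tens a b) = tens (f a) (g b).
Proof. by rewrite /tens -tmap_tens_l -tmap_tens_r rmorphM. Qed.

(* Rewriting with [rmorphD] in place would leave a canonical-instance
   projection in the goal, on which [tmap_tens] no longer matches. *)
Lemma tmapD x y : tmap f g (x + y) = tmap f g x + tmap f g y.
Proof. by rewrite [tmap f g _]rmorphD. Qed.

Lemma tmap_primitive v :
  tmap f g (tens v 1 + tens 1 v) = tens (f v) 1 + tens 1 (g v).
Proof.
rewrite tmapD; apply: f_equal2;
  by rewrite tmap_tens ?[f 1]rmorph1 ?[g 1]rmorph1.
Qed.

End TensorMap.
End Tensor.

Section DiagonalMorphism.
Variables (F : fieldType) (I : choiceType).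
Local Notation SV := (SymV F I).
Local Notation tmap := (@tmap F I).
Local Notation coprod := (@coprod F I).
Local Notation antipode := (@antipode F I).

Variables (T : {lrmorphism SV -> SV}) (w : I -> F).
Hypothesis T_gen : forall i, T (gen F i) = w i *: gen F i.

Lemma diag_morph_coprod a : coprod (T a) = tmap T T (coprod a).
Proof.
apply: (polyalg_lrmorph_eq (f := coprod \o T) (g := tmap T T \o coprod))
  => i /=.
by rewrite T_gen linearZ /= !extm_gen tmap_primitive T_gen -tens_primitiveZ.
Qed.

Lemma diag_morph_antipode a : antipode (T a) = T (antipode a).
Proof.
apply: (polyalg_lrmorph_eq (f := antipode \o T) (g := T \o antipode)) => i /=.
by rewrite T_gen linearZ /= !extm_gen scalerN -T_gen rmorphN.
Qed.
End DiagonalMorphism.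

Section ThetaSymV.
Variables (F : fieldType) (I : choiceType) (deg : I -> nat).
Local Notation SV := (SymV F I).
Local Notation T := (@ThetaSymV F I deg).
Local Notation odd_monom := (odd_monom deg).
Local Notation counit := (@counit F I).
Local Notation Phi := (@PhiSymV F I deg).
Local Notation ThetaSym := (@ThetaSym F).

Lemma odd_monomM (m1 m2 : {cmonom I}) :
  odd_monom (mmul m1 m2) = odd_monom m1 && odd_monom m2.
Proof.
apply/allP/andP => [h|[/allP h1 /allP h2] i].
  by split; apply/allP => i ii; apply: h; rewrite mdomD in_fsetU ii ?orbT.
by rewrite mdomD in_fsetU => /orP[/h1|/h2].
Qed.

Lemma odd_monom1 : odd_monom mone.
Proof. by apply/allP => i; rewrite mdom1 in_fset0. Qed.

Lemma odd_monomU i : odd_monom (ucm i) = odd (deg i).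
Proof.
apply/allP/idP => [|oddi j]; first by apply; rewrite mdomU in_fset1.
by rewrite mdomU in_fset1 => /eqP->.
Qed.

Definition theta_weight (m : {cmonom I}) : F :=
  if odd_monom m then 2%:R ^+ mdeg m else 0.

(* Spelled as in [ThetaSymV], which is thus convertibly [linext theta_monom]. *)
Definition theta_monom (m : {cmonom I}) : SV :=
  if odd_monom m then 2%:R ^+ mdeg m *: << m >> else 0.

Lemma theta_monomE m : theta_monom m = theta_weight m *: << m >>.
Proof. by rewrite /theta_monom /theta_weight; case: ifP; rewrite ?scale0r. Qed.

Lemma theta_weightM m1 m2 :
  theta_weight (mmul m1 m2) = theta_weight m1 * theta_weight m2.
Proof.
rewrite /theta_weight odd_monomM mdegM.
by case: (odd_monom m1); case: (odd_monom m2); rewrite ?mul0r ?mulr0 ?exprD.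
Qed.

Lemma theta_monom_is_mmorphism : mmorphism theta_monom.
Proof.
split=> [m1 m2|]; rewrite !theta_monomE.
  by rewrite theta_weightM -monalgUM -scalerAl -scalerAr scalerA.
by rewrite /theta_weight odd_monom1 mdeg1 expr0 scale1r monalgU1.
Qed.

HB.instance Definition _ :=
  isMultiplicative.Build _ _ theta_monom theta_monom_is_mmorphism.
HB.instance Definition _ := GRing.LRMorphism.copy T (linext theta_monom).

Lemma ThetaSymVU m : T << m >> = theta_weight m *: << m >>.
Proof. by rewrite -theta_monomE; apply: linextU. Qed.

Lemma ThetaSymV_gen i :
  T (gen F i) = (if odd (deg i) then 2%:R else 0) *: gen F i.
Proof. by rewrite ThetaSymVU /theta_weight odd_monomU mdegU expr1. Qed.

Lemma mcoeff_ThetaSymV a m : (T a)@_m = a@_m * theta_weight m.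
Proof.
rewrite [T a](_ : _ = \sum_(k <- msupp a) a@_k *: theta_monom k) //.
rewrite (big_morph (mcoeff m) (@mcoeffD _ _ m) (mcoeff0 m)).
under eq_bigr do rewrite mcoeffZ theta_monomE mcoeffZ mcoeffU1 mulrA.
have [am|am] := boolP (m \in msupp a); last first.
  rewrite (mcoeff_outdom am) mul0r big1_seq // => k /andP[_ ka].
  by case: eqP => [km|_]; [rewrite -km ka in am | rewrite mulr0].
rewrite (big_fsetD1 m am) /= eqxx mulr1 big1_seq ?addr0 // => k.
by rewrite in_fsetD1 => /andP[_ /andP[/negPf-> _]]; rewrite mulr0.
Qed.

Lemma msupp_ThetaSymV a m :
  m \in msupp (T a) -> (m \in msupp a) && odd_monom m.
Proof.
rewrite -!mcoeff_neq0 mcoeff_ThetaSymV /theta_weight.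
case: ifP; rewrite ?mulr0 ?eqxx // andbT => _.
by apply: contraNneq => ->; rewrite mul0r.
Qed.

Lemma counit_ThetaSymV a : counit (T a) = counit a.
Proof.
by rewrite /counit mcoeff_ThetaSymV /theta_weight odd_monom1 mdeg1 mulr1.
Qed.

Lemma ThetaSymV_graded : graded deg T.
Proof. by move=> n a homa m /msupp_ThetaSymV /andP[/homa]. Qed.

Lemma ThetaSymV_in_SymO a : in_SymO deg (T a).
Proof. by move=> m /msupp_ThetaSymV /andP[]. Qed.

Lemma ThetaSymV_hopf_morph : hopf_morph T.
Proof.
split; first by split; [exact: linearP | exact: rmorph1 | exact: rmorphM].
split; [exact: diag_morph_coprod ThetaSymV_gen | exact: counit_ThetaSymV |
        exact: diag_morph_antipode ThetaSymV_gen].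
Qed.

Lemma PhiSymV_ThetaSymV (deg_pos : forall i, (0 < deg i)%N) a :
  Phi (T a) = ThetaSym (Phi a).
Proof.
apply: (polyalg_lrmorph_eq (f := Phi \o T) (g := ThetaSym \o Phi)) => i /=.
rewrite ThetaSymV_gen linearZ /= !extm_gen.
have [d ->] : exists d, deg i = d.+1 by exists (deg i).-1; rewrite prednK.
by rewrite /=; case: (odd d); rewrite /= ?scale0r.
Qed.
End ThetaSymV.

Local Close Scope ring_scope.

Theorem mainTheorem13 (F : fieldType) (I : choiceType) (deg : I -> nat)
  (charF0 : [pchar F]%R =i pred0)
  (deg_pos : forall i, (0 < deg i)%N)
  (deg_fin : forall d : nat, exists s : seq I, forall i, deg i = d -> i \in s) :
  [/\ @hopf_morph F I (@ThetaSymV F I deg),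
      @graded F I deg (@ThetaSymV F I deg),
      (forall a, @in_SymO F I deg (@ThetaSymV F I deg a)),
      (forall a, @PhiSymV F I deg (@ThetaSymV F I deg a)
                 = @ThetaSym F (@PhiSymV F I deg a)) &
      @is_theta_map F I deg (@ThetaSymV F I deg)].
Proof.
have hopf := @ThetaSymV_hopf_morph F I deg.
have grad := @ThetaSymV_graded F I deg.
have PhiT := @PhiSymV_ThetaSymV F I deg deg_pos.
split; [exact: hopf | exact: grad | exact: ThetaSymV_in_SymO | exact: PhiT |].
by split; [exact: hopf | exact: grad | exact: PhiT].
Qed.
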